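(* Let $A$ and $B$ be commutative torsion groups such that $B[p^\infty]=\{0\}$ for all but finitely many primes $p$. Identify $A=\bigoplus_p A[p^\infty]$ and $B=\bigoplus_p B[p^\infty]$ (sums over all primes), and regard $f_\bullet=(f_p)_p\in\bigoplus_p B[p^\infty]^{A[p^\infty]}$ as the map $(x_p)_p\mapsto(f_p(x_p))_p$. Then: (a) $\operatorname{fdeg}(f_\bullet)=\max_p\operatorname{fdeg}(f_p)$ for all such $f_\bullet$; (b) $\mathcal F_n(A,B)=\bigoplus_p\mathcal F_n(A[p^\infty],B[p^\infty])$ for all $n\in\mathbb N\cup\{-\infty\}$; (c) $\mathcal F(A,B)=\bigoplus_p\mathcal F(A[p^\infty],B[p^\infty])$.
   Context: For commutative groups $A,B$, $B^A$ denotes the commutative group (under pointwise addition) of all maps $A\to B$. For $a\in A$, the difference operator $\Delta_a:B^A\to B^A$ is $(\Delta_a f)(x)=f(x+a)-f(x)$. Let $\widetilde{\mathbb N}=\mathbb N\cup\{-\infty,\infty\}$ ($\mathbb N=\{0,1,2,\dots\}$), totally ordered with $-\infty$ least and $\infty$ greatest. The functional degree $\operatorname{fdeg}(f)\in\widetilde{\mathbb N}$ of $f\in B^A$ is: $-\infty$ if $f=0$; otherwise the least $n\in\mathbb N$ such that $\Delta_{a_1}\cdots\Delta_{a_{n+1}}f=0$ for all $a_1,\dots,a_{n+1}\in A$; and $\infty$ if no such $n$ exists. For $n\in\widetilde{\mathbb N}$, $\mathcal F_n(A,B)=\{f\in B^A:\operatorname{fdeg}(f)\le n\}$, and $\mathcal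 F(A,B)=\bigcup_{n<\infty}\mathcal F_n(A,B)$. For a prime $p$, $A[p^\infty]=\{x\in A:p^kx=0\text{ for some }k\ge1\}$. *)

From HB Require Import structures.
From mathcomp Require Import all_boot all_order all_algebra.
From mathcomp Require Import boolp.
Set Implicit Arguments. Unset Strict Implicit. Unset Printing Implicit Defensive.
Import Order.TTheory GRing.Theory Num.Theory.
Local Open Scope ring_scope.

Definition Delta (A B : zmodType) (a : A) (f : A -> B) : A -> B :=
  fun x => f (x + a) - f x.

Definition Deltas (A B : zmodType) (s : seq A) (f : A -> B) : A -> B :=
  foldr (@Delta A B) f s.

Definition diff_vanish (A B : zmodType) (f : A -> B) (n : nat) : Prop :=
  forall s : seq A, size s = n.+1 -> forall x : A, Deltas s f x = 0.

Inductive extnat := ENegInf | EFin of nat | EPosInf.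

Definition extnat_le (m n : extnat) : bool :=
  match m, n with
  | ENegInf, _ => true
  | _, EPosInf => true
  | EFin a, EFin b => (a <= b)%N
  | _, _ => false
  end.


Definition fdeg (A B : zmodType) (f : A -> B) : extnat :=
  if pselect (f = (fun _ => 0)) is left _ then ENegInf else
  if pselect (exists n, `[< diff_vanish f n >]) is left H then EFin (ex_minn H)
  else EPosInf.

Definition Fn (A B : zmodType) (n : extnat) : (A -> B) -> Prop :=
  fun f => extnat_le (fdeg f) n.
Definition Ffin (A B : zmodType) : (A -> B) -> Prop :=
  fun f => exists n : nat, Fn (EFin n) f.

Definition torsion (A : zmodType) : Prop :=
  forall x : A, exists n : nat, (0 < n)%N /\ x *+ n = 0.

Definition ptor (A : zmodType) (p : nat) : {pred A} :=
  fun x => `[< exists k : nat, (0 < k)%N /\ x *+ (p ^ k) = 0 >].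
Arguments ptor : clear implicits.

Fact ptor_zmod_closed (A : zmodType) (p : nat) : zmod_closed (ptor A p).
Proof.
split.
  by apply/asboolP; exists 1%N; rewrite mul0rn.
move=> x y /asboolP[k [k0 hx]] /asboolP[l [l0 hy]].
apply/asboolP; exists (k + l)%N; split; first by rewrite addn_gt0 k0.
rewrite mulrnBl expnD.
have -> : x *+ (p ^ k * p ^ l) = 0 by rewrite mulrnA hx mul0rn.
by rewrite mulnC mulrnA hy mul0rn subr0.
Qed.
HB.instance Definition _ (A : zmodType) (p : nat) :=
  GRing.isZmodClosed.Build A (ptor A p) (ptor_zmod_closed A p).

Definition ptors (A : zmodType) (p : nat) := {x : A | x \in ptor A p}.
HB.instance Definition _ (A : zmodType) (p : nat) :=
  [isSub of ptors A p for @sval A _].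
HB.instance Definition _ (A : zmodType) (p : nat) :=
  [Choice of ptors A p by <:].
HB.instance Definition _ (A : zmodType) (p : nat) :=
  [SubChoice_isSubZmodule of ptors A p by <:].

Definition coptor (A : zmodType) (p : nat) : {pred A} :=
  fun x => `[< exists m : nat, [/\ (0 < m)%N, coprime m p & x *+ m = 0] >].
Arguments coptor : clear implicits.

(* p-component x_p of x in A = (+)_p A[p^oo]: the y in A[p^oo] with
   x - y annihilated by an integer prime to p (0 if no such y exists,
   which does not happen for torsion A). *)
Definition pcomp (A : zmodType) (p : nat) (x : A) : A :=
  if pselect (exists y : A, y \in ptor A p /\ x - y \in coptor A p)
  is left H then projT1 (cid H) else 0.

Definition pproj (A : zmodType) (p : nat) (x : A) : ptors A p :=
  insubd 0 (pcomp p x).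

(* f_bullet: the map (x_p)_p |-> (f_p(x_p))_p, where S is a finite list of
   distinct primes outside of which B[p^oo] = 0 (so the other components
   of the image vanish). *)
Definition fbullet (A B : zmodType) (S : seq nat)
    (f : forall p : nat, ptors A p -> ptors B p) : A -> B :=
  fun x => \sum_(p <- S) val (f p (pproj p x)).

(* A torsion group is the direct sum of its primary parts, and x |-> x_p is
   additive.  Difference operators commute with additive maps, so
   fdeg f_bullet <= n iff fdeg f_p <= n for every p; this gives (a) and one half
   of (b) and (c).  Conversely, let F have finite degree and let F_p(x) be the
   p-component of F(x).  A p-primary map of finite degree is invariant under
   translation by any a killed by an integer prime to p; as x - x_p is such an a,
   F_p(x) = F_p(x_p), so F = f_bullet with f_p the restriction of F_p to A[p^oo]. *)

From HB Require Import structures.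
From mathcomp Require Import all_boot all_order all_algebra.
From mathcomp Require Import boolp.
Set Implicit Arguments. Unset Strict Implicit. Unset Printing Implicit Defensive.
Import GRing.Theory.
Local Open Scope ring_scope.

(** * Primary components of torsion groups *)

Lemma mulrn_gcd_eq0 (A : zmodType) (x : A) a b :
  x *+ a = 0 -> x *+ b = 0 -> x *+ gcdn a b = 0.
Proof.
move=> xa0 xb0; case: (posnP a) => [->|a_gt0]; first by rewrite gcd0n.
have [u _ /dvdnP[w Ew]] := Bezoutl b a_gt0.
have : x *+ (gcdn a b + u * b) = 0 by rewrite Ew mulnC mulrnA xa0 mul0rn.
by rewrite mulrnDr mulnC mulrnA xb0 mul0rn addr0.
Qed.

Lemma mulrn_coprime_eq0 (A : zmodType) (x : A) a b :
  coprime a b -> x *+ a = 0 -> x *+ b = 0 -> x = 0.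
Proof. by move=> /eqP cab xa0 xb0; have := mulrn_gcd_eq0 xa0 xb0; rewrite cab. Qed.

Lemma mulrn_mod (A : zmodType) (x : A) n a b :
  x *+ n = 0 -> a = b %[mod n] -> x *+ a = x *+ b.
Proof.
move=> xn0 ab_mod; rewrite (divn_eq a n) (divn_eq b n) ab_mod !mulrnDr.
by rewrite !(mulnC _ n) !mulrnA xn0 !mul0rn.
Qed.

Lemma ptorP (A : zmodType) p (x : A) :
  reflect (exists k, (0 < k)%N /\ x *+ (p ^ k) = 0) (x \in ptor A p).
Proof. exact: asboolP. Qed.

Lemma coptorP (A : zmodType) p (x : A) :
  reflect (exists m, [/\ (0 < m)%N, coprime m p & x *+ m = 0]) (x \in coptor A p).
Proof. exact: asboolP. Qed.

Fact coptor_zmod_closed (A : zmodType) p : zmod_closed (coptor A p).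
Proof.
split; first by apply/coptorP; exists 1%N; rewrite mul0rn coprime1n.
move=> x y /coptorP[m [m_gt0 co_m xm0]] /coptorP[l [l_gt0 co_l yl0]].
apply/coptorP; exists (m * l)%N; split; first by rewrite muln_gt0 m_gt0.
  by rewrite coprimeMl co_m.
by rewrite mulrnBl mulrnA xm0 mul0rn mulnC mulrnA yl0 mul0rn subr0.
Qed.
HB.instance Definition _ (A : zmodType) (p : nat) :=
  GRing.isZmodClosed.Build A (coptor A p) (coptor_zmod_closed A p).

Lemma ptor_coptor_eq0 (A : zmodType) p (x : A) :
  x \in ptor A p -> x \in coptor A p -> x = 0.
Proof.
move=> /ptorP[k [_ xk0]] /coptorP[m [_ co_m xm0]].
by apply: mulrn_coprime_eq0 xk0 xm0; rewrite coprimeXl // coprime_sym.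
Qed.

Lemma ptor_coptor (A : zmodType) p q (x : A) : prime p -> prime q ->
  q != p -> x \in ptor A q -> x \in coptor A p.
Proof.
move=> pp pq qp /ptorP[k [_ xk0]]; apply/coptorP; exists (q ^ k)%N.
by rewrite expn_gt0 prime_gt0 // coprimeXl // prime_coprime // dvdn_prime2.
Qed.

Section PrimaryComponent.

Variables (A : zmodType) (p : nat).
Hypotheses (hA : torsion A) (pp : prime p).

(* If [n x = 0] and [n = q m] with [q] the [p]-part of [n], then [x_p = c x]
   for the CRT solution [c] of [c = 1 (mod q)], [c = 0 (mod m)]. *)
Lemma pcomp_exists (x : A) :
  exists y, y \in ptor A p /\ x - y \in coptor A p.
Proof.
have [n [n_gt0 xn0]] := hA x.
set q := (n`_p)%N; set m := (n`_p^')%N.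
have Enqm : (q * m)%N = n by rewrite partnC.
have co_qm : coprime q m by apply: coprime_partC.
set c := chinese q m 1 0.
exists (x *+ c); split.
  apply/ptorP; exists (logn p n).+1; split => //.
  have /dvdnP[w Ew] : (n %| c * p ^ (logn p n).+1)%N.
    have m_dvd_c : (m %| c)%N by apply/eqP; rewrite /dvdn chinese_modr // mod0n.
    by rewrite expnS mulnCA -p_part -/q -Enqm mulnC mulnA dvdn_mul // dvdn_mull.
  by rewrite -mulrnA Ew mulnC mulrnA xn0 mul0rn.
apply/coptorP; exists m; split; first exact: part_gt0.
  by rewrite coprime_sym prime_coprime // -p'natE // part_pnat.
rewrite mulrnBl -mulrnA (mulrn_mod (b := m) xn0) ?subrr //.
by rewrite -Enqm -muln_modl chinese_modl // muln_modl mul1n.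
Qed.

Lemma pcomp_ptor (x : A) : pcomp p x \in ptor A p.
Proof.
rewrite /pcomp; case: pselect => [H|]; first exact: (projT2 (cid H)).1.
by move/(_ (pcomp_exists x)).
Qed.

Lemma pcomp_coptor (x : A) : x - pcomp p x \in coptor A p.
Proof.
rewrite /pcomp; case: pselect => [H|]; first exact: (projT2 (cid H)).2.
by move/(_ (pcomp_exists x)).
Qed.

Lemma pcomp_unique (x y : A) :
  y \in ptor A p -> x - y \in coptor A p -> pcomp p x = y.
Proof.
move=> y_ptor xy_coptor; apply/eqP; rewrite -subr_eq0; apply/eqP.
apply: (@ptor_coptor_eq0 _ p); first by rewrite rpredB ?pcomp_ptor.
have -> : pcomp p x - y = (x - y) - (x - pcomp p x) by rewrite opprB [RHS]addrC addrA subrK.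
by rewrite rpredB ?pcomp_coptor.
Qed.

Lemma pcomp_id (y : A) : y \in ptor A p -> pcomp p y = y.
Proof. by move=> y_ptor; apply: pcomp_unique; rewrite ?subrr ?rpred0. Qed.

Lemma pcomp_coptor_eq0 (y : A) : y \in coptor A p -> pcomp p y = 0.
Proof. by move=> y_coptor; apply: pcomp_unique; rewrite ?subr0 ?rpred0. Qed.

Lemma pcomp0 : pcomp p (0 : A) = 0.
Proof. by apply: pcomp_coptor_eq0; rewrite rpred0. Qed.

Lemma pcompD : {morph @pcomp A p : x y / x + y}.
Proof.
move=> x y; apply: pcomp_unique; first by rewrite rpredD ?pcomp_ptor.
by rewrite opprD addrACA rpredD ?pcomp_coptor.
Qed.

Lemma pcompB : {morph @pcomp A p : x y / x - y}.
Proof. by move=> x y; rewrite -[in RHS](subrK y x) (pcompD (x - y)) addrK. Qed.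

Lemma pcomp_sum (I : Type) (r : seq I) (F : I -> A) :
  pcomp p (\sum_(i <- r) F i) = \sum_(i <- r) pcomp p (F i).
Proof. exact: (big_morph _ pcompD pcomp0). Qed.

Lemma pcomp_ptor_prime q (x : A) : prime q -> x \in ptor A q ->
  pcomp p x = if q == p then x else 0.
Proof.
move=> pq; case: eqP => [->|/eqP qp] x_ptor; first exact: pcomp_id.
exact/pcomp_coptor_eq0/(ptor_coptor pp pq).
Qed.

Lemma pcomp_sum_ptor (S : seq nat) (g : nat -> A) : uniq S -> all prime S ->
  (forall q, q \in S -> g q \in ptor A q) ->
  pcomp p (\sum_(q <- S) g q) = if p \in S then g p else 0.
Proof.
move=> S_uniq S_prime g_ptor; rewrite pcomp_sum.
under eq_big_seq => q qS do rewrite (pcomp_ptor_prime (allP S_prime q qS) (g_ptor q qS)).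
case: ifP => pS.
  rewrite (bigD1_seq p) //= eqxx big1_seq ?addr0 // => q /andP[qp _].
  by rewrite (negPf qp).
rewrite big1_seq // => q /andP[_ qS]; case: eqP => // qp.
by rewrite -qp qS in pS.
Qed.

Lemma pproj_val (x : A) : val (pproj p x) = pcomp p x.
Proof. by rewrite /pproj insubdK ?pcomp_ptor. Qed.

Lemma val_pprojK : cancel val (@pproj A p).
Proof. by move=> z; apply: val_inj; rewrite pproj_val pcomp_id ?(valP z). Qed.

Lemma pprojD : {morph @pproj A p : x y / x + y}.
Proof. by move=> x y; apply: val_inj; rewrite raddfD /= !pproj_val pcompD. Qed.

End PrimaryComponent.

(* Induct on [n] with [n c = 0]: for [p = pdiv n], [c] is killed by some [m]
   prime to [p], hence by [gcdn n m], a proper divisor of [n]. *)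
Lemma coptor_all_eq0 (A : zmodType) (c : A) : torsion A ->
  (forall p, prime p -> c \in coptor A p) -> c = 0.
Proof.
move=> hA c_coptor; have [n [n_gt0 cn0]] := hA c.
elim/ltn_ind: n n_gt0 cn0 => n IH n_gt0 cn0.
have [n_le1|n_gt1] := leqP n 1.
  have n1 : n = 1%N by apply/eqP; rewrite eqn_leq n_le1.
  by rewrite -(mulr1n c) -n1.
have pdiv_n := pdiv_prime n_gt1.
have /coptorP[m [_ co_m cm0]] := c_coptor _ pdiv_n.
apply: (IH (gcdn n m)); rewrite ?gcdn_gt0 ?n_gt0 ?mulrn_gcd_eq0 //.
rewrite ltn_neqAle dvdn_leq ?dvdn_gcdl // andbT; apply/negP => /eqP Egcd.
have : (pdiv n %| m)%N by rewrite (dvdn_trans (pdiv_dvd n)) // -Egcd dvdn_gcdr.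
by move: co_m; rewrite coprime_sym prime_coprime // => /negP.
Qed.

(** * Difference operators and functional degree *)

Lemma Deltas_cons (A B : zmodType) a s (G : A -> B) x :
  Deltas (a :: s) G x = Deltas s G (x + a) - Deltas s G x.
Proof. by []. Qed.

Lemma Deltas_postcomp (A B B' : zmodType) (k : B -> B') : {morph k : u v / u - v} ->
  forall (G : A -> B) s x, Deltas s (fun y => k (G y)) x = k (Deltas s G x).
Proof. by move=> kB G; elim=> [|a s IH] x //; rewrite !Deltas_cons !IH kB. Qed.

Lemma Deltas_precomp (A A' B : zmodType) (h : A' -> A) : {morph h : u v / u + v} ->
  forall (G : A -> B) s x, Deltas s (fun y => G (h y)) x = Deltas (map h s) G (h x).
Proof. by move=> hD G; elim=> [|a s IH] x //; rewrite !Deltas_cons !IH hD. Qed.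

Lemma Deltas_sum (A B : zmodType) (I : Type) (r : seq I) (G : I -> A -> B) s x :
  Deltas s (fun y => \sum_(i <- r) G i y) x = \sum_(i <- r) Deltas s (G i) x.
Proof.
elim: s x => [|a s IH] x //; rewrite Deltas_cons !IH -sumrB.
by apply: eq_bigr => i _; rewrite Deltas_cons.
Qed.

Lemma Deltas_nseqS (A B : zmodType) (a : A) k (G : A -> B) :
  Deltas (nseq k.+1 a) G = Deltas (nseq k a) (Delta a G).
Proof. by elim: k => [|k IH] //=; rewrite -IH. Qed.

Lemma diff_vanishS (A B : zmodType) (G : A -> B) n :
  diff_vanish G n -> diff_vanish G n.+1.
Proof. by move=> G_van [|a s] // [size_s] x; rewrite Deltas_cons !G_van ?subrr. Qed.

Lemma diff_vanish_leq (A B : zmodType) (G : A -> B) n m :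
  (n <= m)%N -> diff_vanish G n -> diff_vanish G m.
Proof.
move=> /subnK <-; elim: (m - n)%N => [|k IH] // G_van.
exact/diff_vanishS/IH.
Qed.

Lemma diff_vanish0 (A B : zmodType) n : diff_vanish (fun _ : A => 0 : B) n.
Proof. by move=> s _; elim: s => [|a s IH] x //; rewrite Deltas_cons !IH subrr. Qed.

Lemma fdeg_le_ninf (A B : zmodType) (G : A -> B) :
  extnat_le (fdeg G) ENegInf <-> G = (fun _ => 0).
Proof.
rewrite /fdeg; case: pselect => [G0|G_ne0]; first by [].
by case: pselect => [?|?]; split => // /G_ne0.
Qed.

Lemma fdeg_le_fin (A B : zmodType) (G : A -> B) n :
  extnat_le (fdeg G) (EFin n) <-> diff_vanish G n.
Proof.
rewrite /fdeg; case: pselect => [->|_]; first by split=> // _; apply: diff_vanish0.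
case: pselect => [ex_n|no_n] /=; last first.
  by split=> // G_van; case: no_n; exists n; apply/asboolP.
case: ex_minnP => m /asboolP G_van m_min; split => [/diff_vanish_leq|n_van]; first exact.
exact/m_min/asboolP.
Qed.

Lemma extnat_le_refl (a : extnat) : extnat_le a a.
Proof. by case: a => //= n; exact: leqnn. Qed.

Lemma extnat_le_trans (b a c : extnat) :
  extnat_le a b -> extnat_le b c -> extnat_le a c.
Proof. by case: a => [|x|]; case: b => [|y|]; case: c => [|z|] //=; exact: leq_trans. Qed.

Lemma extnat_le_anti (a b : extnat) : extnat_le a b -> extnat_le b a -> a = b.
Proof.
by case: a => [|m|]; case: b => [|n|] //= mn nm; congr EFin; apply/eqP; rewrite eqn_leq mn.
Qed.

Lemma extnat_le_total (a b : extnat) : extnat_le a b || extnat_le b a.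
Proof. by case: a => [|m|]; case: b => [|n|] //=; exact: leq_total. Qed.

Lemma extnat_le_fin (a b : extnat) : extnat_le a b -> b <> EPosInf -> a <> EPosInf.
Proof. by case: a; case: b. Qed.

Lemma Ffin_fdeg (A B : zmodType) (G : A -> B) : Ffin G <-> fdeg G <> EPosInf.
Proof.
split=> [[n]|]; first by rewrite /Fn; case: fdeg.
rewrite /Ffin /Fn; case: (fdeg G) => [|m|] // _; first by exists 0%N.
by exists m; apply: extnat_le_refl.
Qed.

Lemma exists_prime_argmax (d : nat -> extnat) (T : seq nat) : all prime T ->
  exists p, prime p /\ {in T, forall q, extnat_le (d q) (d p)}.
Proof.
elim: T => [|q T IH] /=; first by exists 2%N.
case/andP=> pq /IH[p [pp p_max]].
have [qp|pq'] := orP (extnat_le_total (d q) (d p)).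
  by exists p; split=> // r /predU1P[->|/p_max].
exists q; split=> // r /predU1P[->|/p_max rp]; first exact: extnat_le_refl.
exact: extnat_le_trans rp pq'.
Qed.

Lemma translate_mulrn_invariant (A : zmodType) (T : Type) (H : A -> T) (a : A) :
  (forall y, H (y + a) = H y) -> forall y t, H (y + a *+ t) = H y.
Proof. by move=> Ha y; elim=> [|t IH]; rewrite ?mulr0n ?addr0 // mulrSr addrA Ha. Qed.

Lemma translate_mulrn_Delta (A B : zmodType) (G : A -> B) (a : A) :
  (forall y, Delta a G (y + a) = Delta a G y) ->
  forall y t, G (y + a *+ t) = G y + Delta a G y *+ t.
Proof.
move=> Da_periodic y; elim=> [|t IH]; first by rewrite !mulr0n !addr0.
have -> : G (y + a *+ t.+1) = G (y + a *+ t) + Delta a G (y + a *+ t).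
  by rewrite mulrSr addrA /Delta addrCA subrr addr0.
by rewrite IH (translate_mulrn_invariant Da_periodic) mulrSr [RHS]addrA.
Qed.

(* [Delta_a G] is [a]-periodic by induction, so [G (y + t a) = G y + t Delta_a G y];
   taking [t = m] with [m a = 0] and [m] prime to [p] kills the [p]-primary [Delta_a G y]. *)
Lemma coptor_translation_invariant (A B : zmodType) p (G : A -> B) (a : A) n :
  (forall y, G y \in ptor B p) -> (forall y, Deltas (nseq n.+1 a) G y = 0) ->
  a \in coptor A p -> forall y, G (y + a) = G y.
Proof.
move=> G_ptor + /coptorP[m [m_gt0 co_m am0]].
elim: n G G_ptor => [|n IH] G G_ptor G_van y.
  by apply/eqP; rewrite -subr_eq0; apply/eqP/G_van.
have DaG_ptor y' : Delta a G y' \in ptor B p by rewrite rpredB.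
have DaG_periodic : forall y', Delta a G (y' + a) = Delta a G y'.
  by apply: IH DaG_ptor _ => y'; rewrite -Deltas_nseqS.
have DaG_m0 : Delta a G y *+ m = 0.
  by apply: (addrI (G y)); rewrite -translate_mulrn_Delta // am0 !addr0.
have DaG0 : Delta a G y = 0.
  by apply: (ptor_coptor_eq0 (DaG_ptor y)); apply/coptorP; exists m.
by apply/eqP; rewrite -subr_eq0 -/(Delta a G y) DaG0.
Qed.

(** * Maps between primary decompositions *)

Section PrimaryDecomposition.

Variables (A B : zmodType) (S : seq nat).
Hypotheses (hA : torsion A) (hB : torsion B) (S_uniq : uniq S) (S_prime : all prime S).
Hypothesis S_support :
  forall p, prime p -> p \notin S -> forall b : B, b \in ptor B p -> b = 0.

Implicit Type f : forall p, ptors A p -> ptors B p.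

Lemma ptors_outside_eq0 p (z : ptors B p) : prime p -> p \notin S -> z = 0.
Proof. by move=> pp pS; apply: val_inj; rewrite raddf0; apply: (S_support pp pS) (valP z). Qed.

Lemma sum_pcomp (b : B) : b = \sum_(p <- S) pcomp p b.
Proof.
apply/eqP; rewrite -subr_eq0; apply/eqP; apply: (coptor_all_eq0 hB) => p pp.
set d := _ - _; have -> : d = d - pcomp p d; last exact: pcomp_coptor.
rewrite pcompB // pcomp_sum_ptor // => [|q qS]; last exact/pcomp_ptor/(allP S_prime).
case: ifP => pS; first by rewrite subrr subr0.
by rewrite (S_support pp (negbT pS) (pcomp_ptor hB pp b)) !subr0.
Qed.

Lemma fbullet_component f p (y : ptors A p) :
  p \in S -> val (f p y) = pcomp p (fbullet S f (val y)).
Proof.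
move=> pS; have pp := allP S_prime p pS.
by rewrite pcomp_sum_ptor // ?pS ?val_pprojK // => q _; apply: valP.
Qed.

Lemma Deltas_fbullet f s x : Deltas s (fbullet S f) x =
  \sum_(q <- S) val (Deltas (map (pproj q) s) (f q) (pproj q x)).
Proof.
rewrite Deltas_sum; apply: eq_big_seq => q qS; have pq := allP S_prime q qS.
by rewrite (Deltas_postcomp (raddfB val)) (Deltas_precomp (pprojD hA pq)).
Qed.

Lemma diff_vanish_fbullet f n :
  diff_vanish (fbullet S f) n <-> forall p, prime p -> diff_vanish (f p) n.
Proof.
split=> [f_van p pp s size_s y | fp_van s size_s x]; last first.
  rewrite Deltas_fbullet big1_seq // => q /andP[_ qS].
  by rewrite fp_van ?size_map ?raddf0 //; apply: (allP S_prime).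
have [pS|pS] := boolP (p \in S); last exact: ptors_outside_eq0.
apply: val_inj; rewrite raddf0 -(pcomp0 hB pp) -(f_van (map val s) _ (val y)) ?size_map //.
rewrite -(Deltas_postcomp (raddfB val)).
have -> : (fun y => val (f p y)) = fun y => pcomp p (fbullet S f (val y)).
  by apply: funext => y'; apply: fbullet_component.
by rewrite (Deltas_postcomp (pcompB hB pp)) (Deltas_precomp (raddfD val)).
Qed.

Lemma fbullet_eq0 f :
  fbullet S f = (fun _ => 0) <-> forall p, prime p -> f p = (fun _ => 0).
Proof.
split=> [f0 p pp | fp0]; apply: funext => y.
  have [pS|pS] := boolP (p \in S); last exact: ptors_outside_eq0.
  by apply: val_inj; rewrite fbullet_component // f0 raddf0 pcomp0.
by rewrite /fbullet big1_seq // => q /andP[_ qS]; rewrite fp0 ?raddf0 //; apply: (allP S_prime).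
Qed.

Lemma fdeg_fbullet_le f e :
  extnat_le (fdeg (fbullet S f)) e <-> forall p, prime p -> extnat_le (fdeg (f p)) e.
Proof.
case: e => [|n|].
- rewrite fdeg_le_ninf fbullet_eq0.
  by split=> fp p /fp /(fdeg_le_ninf (f p)).
- rewrite fdeg_le_fin diff_vanish_fbullet.
  by split=> fp p /fp /(fdeg_le_fin (f p)).
- by split=> [_ p _|_]; [case: (fdeg (f p)) | case: (fdeg (fbullet S f))].
Qed.

Lemma fdeg_outside f p e : prime p -> p \notin S -> extnat_le (fdeg (f p)) e.
Proof.
move=> pp pS; apply: (extnat_le_trans (b := ENegInf)); last by case: e.
by apply/(fdeg_le_ninf (f p))/funext => y; apply: ptors_outside_eq0.
Qed.

Lemma fbullet_pproj (F : A -> B) n :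
  diff_vanish F n -> F = fbullet S (fun p y => pproj p (F (val y))).
Proof.
move=> F_van; apply: funext => x; rewrite {1}(sum_pcomp (F x)) /fbullet.
apply: eq_big_seq => p pS; have pp := allP S_prime p pS; rewrite !pproj_val //.
have Fp_van y : Deltas (nseq n.+1 (x - pcomp p x)) (fun z => pcomp p (F z)) y = 0.
  by rewrite (Deltas_postcomp (pcompB hB pp)) F_van ?size_nseq // pcomp0.
have Fp_ptor y : pcomp p (F y) \in ptor B p by apply: pcomp_ptor.
have := coptor_translation_invariant Fp_ptor Fp_van (pcomp_coptor hA pp x) (pcomp p x).
by rewrite addrC subrK.
Qed.

Lemma fdeg_fbullet_max f :
  (forall p, prime p -> extnat_le (fdeg (f p)) (fdeg (fbullet S f))) /\
  (exists p, prime p /\ fdeg (f p) = fdeg (fbullet S f)).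
Proof.
split; first exact/fdeg_fbullet_le/extnat_le_refl.
have [p [pp p_max]] := exists_prime_argmax (fun q => fdeg (f q)) S_prime.
exists p; split => //; apply: extnat_le_anti.
  exact: (fdeg_fbullet_le f _).1 (extnat_le_refl _) p pp.
apply/fdeg_fbullet_le => q pq; have [qS|qS] := boolP (q \in S); first exact: p_max.
exact: fdeg_outside.
Qed.

Lemma Fn_fbullet n : n <> EPosInf -> forall F : A -> B,
  Fn n F <-> exists f, (forall p, prime p -> Fn n (f p)) /\ F = fbullet S f.
Proof.
move=> n_fin F; split=> [F_n | [f [fp_n ->]]]; last exact/fdeg_fbullet_le.
have [m F_van] : exists m, diff_vanish F m.
  case: n n_fin F_n => [_ /fdeg_le_ninf ->|m _ /fdeg_le_fin|//]; last by exists m.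
  by exists 0%N; apply: diff_vanish0.
have F_dec := fbullet_pproj F_van.
exists (fun p y => pproj p (F (val y))); split=> //.
by apply: (fdeg_fbullet_le _ n).1; rewrite -F_dec.
Qed.

Lemma Ffin_fbullet (F : A -> B) :
  Ffin F <-> exists f, (forall p, prime p -> Ffin (f p)) /\ F = fbullet S f.
Proof.
split=> [/Ffin_fdeg F_fin | [f [fp_fin ->]]].
  have [f [fp_le F_dec]] := (Fn_fbullet F_fin F).1 (extnat_le_refl _).
  exists f; split=> // p /fp_le fpF_le; apply/(Ffin_fdeg (f p)).
  exact: extnat_le_fin fpF_le F_fin.
apply/(Ffin_fdeg (fbullet S f)); have [p [pp <-]] := (fdeg_fbullet_max f).2.
exact/(Ffin_fdeg (f p))/fp_fin.
Qed.

End PrimaryDecomposition.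

Theorem corollary3 (A B : zmodType) (S : seq nat)
  (hA : torsion A) (hB : torsion B)
  (hSu : uniq S) (hSp : all prime S)
  (hS : forall p : nat, prime p -> p \notin S -> forall b : B, b \in ptor B p -> b = 0) :
  (* (a) *)
  (forall f : forall p : nat, ptors A p -> ptors B p,
      (forall p : nat, prime p -> extnat_le (fdeg (f p)) (fdeg (fbullet S f))) /\
      (exists p : nat, prime p /\ fdeg (f p) = fdeg (fbullet S f)))
  /\
  (* (b) *)
  (forall n : extnat, n <> EPosInf -> forall F : A -> B,
      Fn n F <->
      exists f : forall p : nat, ptors A p -> ptors B p,
        (forall p : nat, prime p -> Fn n (f p)) /\ F = fbullet S f)
  /\
  (* (c) *)
  (forall F : A -> B,
      Ffin F <->
      exists f : forall p : nat, ptors A p -> ptors B p,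
        (forall p : nat, prime p -> Ffin (f p)) /\ F = fbullet S f).
Proof.
split; first exact: fdeg_fbullet_max.
by split; [exact: Fn_fbullet | exact: Ffin_fbullet].
Qed.
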